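(* Let $(W,S)$ be a Coxeter system with $S$ finite and $\phi:\operatorname{Ad}(Q_W)\to W$ the homomorphism $e_x\mapsto x$. Then $\phi$ restricts to an isomorphism $[\operatorname{Ad}(Q_W),\operatorname{Ad}(Q_W)]\xrightarrow{\cong}[W,W]$ of commutator subgroups.
   Context: A Coxeter system $(W,S)$: $S$ finite, $m:S\times S\to\mathbb{N}\cup\{\infty\}$ with $m(s,s)=1$, $2\le m(s,t)=m(t,s)\le\infty$ for $s\ne t$, $W=\langle s\in S\mid (st)^{m(s,t)}=1\ (m(s,t)<\infty)\rangle$. The Coxeter quandle $Q_W=\bigcup_{w\in W}w^{-1}Sw$ has operation $x\ast y=yxy$, and $\operatorname{Ad}(Q_W)=\langle e_x\ (x\in Q_W)\mid e_y^{-1}e_xe_y=e_{x\ast y}\ (x,y\in Q_W)\rangle$. *)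

From mathcomp Require Import all_boot.
Set Implicit Arguments. Unset Strict Implicit. Unset Printing Implicit Defensive.

Record group := Group {
  carrier :> Type;
  gmul : carrier -> carrier -> carrier;
  gone : carrier;
  ginv : carrier -> carrier;
  gmulA : forall x y z, gmul x (gmul y z) = gmul (gmul x y) z;
  gmul1 : forall x, gmul gone x = x;
  gmulV : forall x, gmul (ginv x) x = gone
}.
Arguments gmul {g}. Arguments gone {g}. Arguments ginv {g}.

Fixpoint gpow (G : group) (x : G) (n : nat) : G :=
  match n with 0 => gone | n'.+1 => gmul x (gpow x n') end.

Definition is_hom (G H : group) (f : G -> H) : Prop :=
  forall x y, f (gmul x y) = gmul (f x) (f y).

Definition gcomm (G : group) (a b : G) : G :=
  gmul (gmul (ginv a) (ginv b)) (gmul a b).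

(* The commutator subgroup [G,G]: the subgroup generated by all commutators.
   Since [a,b]^-1 = [b,a], it consists of finite products of commutators. *)
Inductive in_commutator (G : group) : G -> Prop :=
| comm_one : in_commutator gone
| comm_mul a b g : in_commutator g -> in_commutator (gmul (gcomm a b) g).

(* Coxeter matrix on a finite set S; None encodes m(s,t) = infinity. *)
Definition coxeter_matrix (S : finType) (m : S -> S -> option nat) : Prop :=
  (forall s, m s s = Some 1) /\ (forall s t, m s t = m t s) /\
  (forall s t, s <> t -> match m s t with Some k => 2 <= k | None => true end).

Definition coxeter_rels (S : finType) (m : S -> S -> option nat) (G : group)
  (f : S -> G) : Prop :=
  forall s t k, m s t = Some k -> gpow (gmul (f s) (f t)) k = gone.

Definition is_coxeter_group (S : finType) (m : S -> S -> option nat)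
  (W : group) (sgen : S -> W) : Prop :=
  coxeter_matrix m /\ coxeter_rels m sgen /\
  forall (H : group) (f : S -> H), coxeter_rels m f ->
    exists h : W -> H, is_hom h /\ (forall s, h (sgen s) = f s) /\
      forall h' : W -> H, is_hom h' -> (forall s, h' (sgen s) = f s) ->
        forall x, h' x = h x.

Definition in_QW (S : finType) (W : group) (sgen : S -> W) (x : W) : Prop :=
  exists (w : W) (s : S), x = gmul (gmul (ginv w) (sgen s)) w.

Definition QW (S : finType) (W : group) (sgen : S -> W) :=
  {x : W | in_QW sgen x}.

Definition qop_rel (S : finType) (W : group) (sgen : S -> W)
  (x y z : QW sgen) : Prop :=
  proj1_sig z = gmul (gmul (proj1_sig y) (proj1_sig x)) (proj1_sig y).

Definition adjoint_rels (S : finType) (W : group) (sgen : S -> W)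
  (H : group) (f : QW sgen -> H) : Prop :=
  forall x y z : QW sgen, qop_rel x y z ->
    gmul (gmul (ginv (f y)) (f x)) (f y) = f z.

Definition is_adjoint_group (S : finType) (W : group) (sgen : S -> W)
  (A : group) (e : QW sgen -> A) : Prop :=
  adjoint_rels e /\
  forall (H : group) (f : QW sgen -> H), adjoint_rels f ->
    exists h : A -> H, is_hom h /\ (forall x, h (e x) = f x) /\
      forall h' : A -> H, is_hom h' -> (forall x, h' (e x) = f x) ->
        forall a, h' a = h a.

(* The squares [e_x^2] are central in Ad(Q_W), and [e_x^2] only depends on the
   W-conjugacy class of the reflection [x]; they generate a central subgroup N.
   In Ad(Q_W)/N the images of the [e_x] are involutions satisfying the Coxeter
   relations, so [s |-> e_s N] extends to a homomorphism
   sigma : W -> Ad(Q_W)/N, and sigma \o phi is the projection; hence ker phi is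
   contained in N.  The homomorphism Ad(Q_W) -> Z^S sending [e_x] to the
   indicator of (a fixed representative generator of) the class of [x] kills
   commutators but is injective on N, so phi is injective on [Ad(Q_W), Ad(Q_W)];
   surjectivity onto [W, W] holds because phi is onto. *)

From Pilot Require Import Defs.
From mathcomp Require Import all_boot ssralg ssrint zify boolp.
Set Implicit Arguments. Unset Strict Implicit. Unset Printing Implicit Defensive.

Declare Scope grp_scope.
Local Notation "x * y" := (gmul x y) : grp_scope.
Local Notation "x ^-1" := (ginv x) : grp_scope.
Local Notation "x ^+ n" := (gpow x n) : grp_scope.
Local Notation "1" := gone : grp_scope.
Local Open Scope grp_scope.
Local Notation sval := proj1_sig.

Section GroupIdentities.
Variable G : group.
Implicit Types x y z : G.

Lemma mulKg x y : x^-1 * (x * y) = y.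
Proof. by rewrite gmulA gmulV gmul1. Qed.

Lemma mulgV x : x * x^-1 = 1.
Proof.
have h : x^-1^-1 * x^-1 = 1 by apply: gmulV.
by rewrite -[x * _]gmul1 -h -gmulA [x^-1 * _]gmulA gmulV gmul1 h.
Qed.

Lemma mulg1 x : x * 1 = x.
Proof. by rewrite -(gmulV x) gmulA mulgV gmul1. Qed.

Lemma mulKVg x y : x * (x^-1 * y) = y.
Proof. by rewrite gmulA mulgV gmul1. Qed.

Lemma mulgK x y : y * x * x^-1 = y.
Proof. by rewrite -gmulA mulgV mulg1. Qed.

Lemma mulgKV x y : y * x^-1 * x = y.
Proof. by rewrite -gmulA gmulV mulg1. Qed.

Lemma mulgI x : injective (gmul x).
Proof. by move=> y z e; rewrite -(mulKg x y) e mulKg. Qed.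

Lemma mulIg x : injective (gmul^~ x).
Proof. by move=> y z e; rewrite -(mulgK x y) /= e mulgK. Qed.

Lemma mulg_eq1l x y : y * x = 1 -> y = x^-1.
Proof. by move=> e; rewrite -(mulgK x y) e gmul1. Qed.

Lemma mulg_eq1r x y : x * y = 1 -> y = x^-1.
Proof. by move=> e; rewrite -(mulKg x y) e mulg1. Qed.

Lemma invgK x : x^-1^-1 = x.
Proof. by symmetry; apply: mulg_eq1l; rewrite mulgV. Qed.

Lemma invMg x y : (x * y)^-1 = y^-1 * x^-1.
Proof. by symmetry; apply: mulg_eq1l; rewrite -gmulA mulKg gmulV. Qed.

Lemma invg1 : (1 : G)^-1 = 1.
Proof. by symmetry; apply: mulg_eq1l; rewrite gmul1. Qed.

Lemma gpowSr x n : x ^+ n.+1 = x ^+ n * x.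
Proof.
elim: n => [|n IHn]; first by rewrite /= mulg1 gmul1.
by rewrite -[x ^+ n.+2]/(x * x ^+ n.+1) {1}IHn gmulA.
Qed.

Lemma gpowD x n k : x ^+ (n + k) = x ^+ n * x ^+ k.
Proof. by elim: n => [|n IHn] /=; rewrite ?gmul1 // IHn gmulA. Qed.

Lemma mul_gpow_swap x y n : y * (x * y) ^+ n = (y * x) ^+ n * y.
Proof. by elim: n => [|n IHn] /=; rewrite ?gmul1 ?mulg1 // -[RHS]gmulA -IHn !gmulA. Qed.

End GroupIdentities.

Section Homomorphisms.
Variables (G H : group) (f : G -> H).
Hypothesis f_hom : is_hom f.

Lemma hom1 : f 1 = 1.
Proof. by apply: (@mulgI _ (f 1)); rewrite -f_hom !mulg1. Qed.

Lemma homV x : f x^-1 = (f x)^-1.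
Proof. by apply: mulg_eq1l; rewrite -f_hom gmulV hom1. Qed.

Lemma homX x n : f (x ^+ n) = f x ^+ n.
Proof. by elim: n => [|n IHn] /=; rewrite ?hom1 // f_hom IHn. Qed.

End Homomorphisms.

Definition central (G : group) (a : G) : Prop := forall b, a * b = b * a.

Definition abelian (G : group) : Prop := forall a : G, central a.

Section Centrality.
Variable G : group.
Implicit Types a b : G.

Lemma central1 : central (1 : G).
Proof. by move=> b; rewrite gmul1 mulg1. Qed.

Lemma commute_invg a b : a * b = b * a -> a * b^-1 = b^-1 * a.
Proof. by move=> ab; apply: (@mulgI _ b); rewrite gmulA -ab mulgK mulKVg. Qed.

Lemma centralV a : central a -> central a^-1.
Proof. by move=> ca b; symmetry; apply: commute_invg; symmetry; apply: ca. Qed.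

Lemma centralM a b : central a -> central b -> central (a * b).
Proof. by move=> ca cb c; rewrite -gmulA cb gmulA ca gmulA. Qed.

Lemma centralX a n : central a -> central (a ^+ n).
Proof. by move=> ca; elim: n => [|n IHn] /=; [apply: central1 | apply: centralM]. Qed.

End Centrality.

Section Commutators.
Variables (G H : group) (f : G -> H).
Hypothesis f_hom : is_hom f.

Lemma hom_gcomm a b : f (gcomm a b) = gcomm (f a) (f b).
Proof. by rewrite /gcomm !f_hom !(homV f_hom). Qed.

Lemma hom_commutator a : in_commutator a -> in_commutator (f a).
Proof.
elim=> [|x y g _ IHg]; first by rewrite (hom1 f_hom); apply: comm_one.
by rewrite f_hom hom_gcomm; apply: comm_mul.
Qed.

Lemma abelian_commutator : abelian H -> forall a, in_commutator a -> f a = 1.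
Proof.
move=> abH a; elim=> [|a' b g _ IHg]; first exact: hom1.
by rewrite f_hom hom_gcomm IHg mulg1 /gcomm [f a' * _]abH gmulA mulgKV gmulV.
Qed.

Lemma commutator_surj_hom : (forall y, exists x, f x = y) ->
  forall y, in_commutator y <-> exists a, in_commutator a /\ f a = y.
Proof.
move=> f_surj y; split; last by move=> [a [ca <-]]; apply: hom_commutator.
elim=> [|a b g _ [g' [cg' <-]]].
  by exists 1; split; [apply: comm_one | apply: hom1].
have [[a' <-] [b' <-]] := (f_surj a, f_surj b).
by exists (gcomm a' b' * g'); split; [apply: comm_mul | rewrite f_hom hom_gcomm].
Qed.

End Commutators.

Lemma commutator_inj_hom (G H K : group) (f : G -> H) (lam : G -> K) :
    is_hom f -> is_hom lam -> abelian K ->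
    (forall a, f a = 1 -> lam a = 1 -> a = 1) ->
  forall a b, in_commutator a -> in_commutator b -> f a = f b -> a = b.
Proof.
move=> f_hom lam_hom abK ker_trivial a b ca cb fab.
have lam_ab : lam (a^-1 * b) = 1.
  by rewrite lam_hom (homV lam_hom) !(abelian_commutator lam_hom abK) // invg1 gmul1.
have f_ab : f (a^-1 * b) = 1 by rewrite f_hom (homV f_hom) fab gmulV.
by rewrite -(mulKVg a b) (ker_trivial _ f_ab lam_ab) mulg1.
Qed.

Lemma sval_inj (T : Type) (P : T -> Prop) : injective (@proj1_sig T P).
Proof. by case=> a Pa [b Pb] /= eab; apply: eq_exist. Qed.

Inductive gen_by (G : group) (I : Type) (g : I -> G) : G -> Prop :=
| gen_by1 : gen_by g 1
| gen_byM i a : gen_by g a -> gen_by g (g i * a)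
| gen_byVM i a : gen_by g a -> gen_by g ((g i)^-1 * a).

Section GeneratedSubgroup.
Variables (G : group) (I : Type) (g : I -> G).

Lemma gen_by_mul a b : gen_by g a -> gen_by g b -> gen_by g (a * b).
Proof.
elim=> [|i a' _ IHa|i a' _ IHa] gb; rewrite ?gmul1 // -gmulA.
  by apply: gen_byM; apply: IHa.
by apply: gen_byVM; apply: IHa.
Qed.

Lemma gen_by_gen i : gen_by g (g i).
Proof. by rewrite -(mulg1 (g i)); apply/gen_byM/gen_by1. Qed.

Lemma gen_by_inv a : gen_by g a -> gen_by g a^-1.
Proof.
elim=> [|i a' _ IHa|i a' _ IHa]; first by rewrite invg1; apply: gen_by1.
  by rewrite invMg; apply: gen_by_mul IHa _; rewrite -(mulg1 (g i)^-1); apply/gen_byVM/gen_by1.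
by rewrite invMg invgK; apply: gen_by_mul IHa (gen_by_gen i).
Qed.

Lemma hom_eq_gen_by (H : group) (f f' : G -> H) : is_hom f -> is_hom f' ->
  (forall i, f (g i) = f' (g i)) -> forall a, gen_by g a -> f a = f' a.
Proof.
move=> f_hom f'_hom fg a; elim=> [|i {}a _ IHa|i {}a _ IHa].
- by rewrite (hom1 f_hom) (hom1 f'_hom).
- by rewrite f_hom f'_hom fg IHa.
- by rewrite f_hom f'_hom (homV f_hom) (homV f'_hom) fg IHa.
Qed.

Lemma central_gen_by c : (forall i, c * g i = g i * c) ->
  forall a, gen_by g a -> c * a = a * c.
Proof.
move=> cg a; elim=> [|i {}a _ IHa|i {}a _ IHa]; first by rewrite gmul1 mulg1.
  by rewrite gmulA cg -gmulA IHa gmulA.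
by rewrite gmulA commute_invg // -gmulA IHa gmulA.
Qed.

Definition gen_group : group.
refine (@Defs.Group {a | gen_by g a}
  (fun a b => exist _ _ (gen_by_mul (proj2_sig a) (proj2_sig b)))
  (exist _ 1 (gen_by1 g)) (fun a => exist _ _ (gen_by_inv (proj2_sig a))) _ _ _).
- by move=> a b c; apply: sval_inj; rewrite /= gmulA.
- by move=> a; apply: sval_inj; rewrite /= gmul1.
- by move=> a; apply: sval_inj; rewrite /= gmulV.
Defined.

Definition gen_incl (i : I) : gen_group := exist _ (g i) (gen_by_gen i).

Lemma gen_group_pow (a : gen_group) n : sval (a ^+ n) = sval a ^+ n.
Proof. by elim: n => [|n IHn] //=; rewrite IHn. Qed.

End GeneratedSubgroup.

Definition presents (G : group) (I : Type) (g : I -> G)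
    (rels : forall H : group, (I -> H) -> Prop) : Prop :=
  rels G g /\ forall (H : group) (f : I -> H), rels H f ->
    exists h : G -> H, is_hom h /\ (forall i, h (g i) = f i) /\
      forall h' : G -> H, is_hom h' -> (forall i, h' (g i) = f i) ->
        forall x, h' x = h x.

Lemma presents_gen_by (G : group) (I : Type) (g : I -> G) rels :
  presents g rels -> rels (gen_group g) (gen_incl g) -> forall a, gen_by g a.
Proof.
move=> [rels_g univ] rels_sub a.
have [h [h_hom [h_g _]]] := univ _ _ rels_sub.
have [h0 [_ [_ h0_uniq]]] := univ _ _ rels_g.
have id_a := h0_uniq id (fun _ _ => erefl) (fun _ => erefl) a.
have val_h_a := h0_uniq (fun b => sval (h b)) (fun b c => f_equal _ (h_hom b c))
  (fun i => f_equal _ (h_g i)) a.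
suff -> : a = sval (h a) by apply: proj2_sig.
by rewrite val_h_a; apply: id_a.
Qed.

Section Quotient.
Variables (G : group) (N : G -> Prop).
Hypotheses (N1 : N 1) (NM : forall a b, N a -> N b -> N (a * b))
  (NV : forall a, N a -> N a^-1) (Nconj : forall a b, N a -> N (b^-1 * a * b)).

Definition coset_rel (a b : G) : Prop := N (a^-1 * b).

Definition coset_type : Type := {P : G -> Prop | exists a, P = coset_rel a}.

Definition coset (a : G) : coset_type := exist _ (coset_rel a) (ex_intro _ a erefl).

Definition coset_repr (P : coset_type) : G := sval (cid (proj2_sig P)).

Lemma coset_reprK P : coset (coset_repr P) = P.
Proof.
rewrite /coset_repr; case: (cid _) => a /= Pa.
by case: P Pa => P PN /= Pa; apply: eq_exist.
Qed.

Lemma coset_eq a b : N (a^-1 * b) -> coset a = coset b.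
Proof.
move=> Nab; apply: eq_exist; apply/funext => c; apply/propext; rewrite /coset_rel.
split=> Nc.
  by rewrite -(mulKg (a^-1 * b) (b^-1 * c)) -gmulA mulKVg; apply: NM; first apply: NV.
by rewrite -(mulKVg b c) gmulA; apply: NM.
Qed.

Lemma coset_eqP a b : coset a = coset b -> N (a^-1 * b).
Proof.
move/(congr1 (fun P : coset_type => sval P b)) => /= eq_ab.
by rewrite -/(coset_rel a b) eq_ab /coset_rel gmulV.
Qed.

Lemma coset_repr_coset a : N ((coset_repr (coset a))^-1 * a).
Proof. by apply: coset_eqP; rewrite coset_reprK. Qed.

Definition coset_mul (P Q : coset_type) := coset (coset_repr P * coset_repr Q).

Definition coset_inv (P : coset_type) := coset (coset_repr P)^-1.

Lemma coset_mulE a b : coset_mul (coset a) (coset b) = coset (a * b).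
Proof.
apply: coset_eq; set a' := coset_repr (coset a); set b' := coset_repr (coset b).
have -> : (a' * b')^-1 * (a * b) = (b'^-1 * (a'^-1 * a) * b') * (b'^-1 * b).
  by rewrite invMg -!gmulA mulKVg.
by apply: NM; [apply: Nconj; apply: coset_repr_coset | apply: coset_repr_coset].
Qed.

Lemma coset_invE a : coset_inv (coset a) = coset a^-1.
Proof.
apply: coset_eq; set a' := coset_repr (coset a).
have -> : a'^-1^-1 * a^-1 = a'^-1^-1 * (a'^-1 * a)^-1 * a'^-1.
  by rewrite invMg !invgK gmulA mulgK.
by apply/Nconj/NV/coset_repr_coset.
Qed.

Lemma coset_ind (P : coset_type -> Prop) : (forall a, P (coset a)) -> forall Q, P Q.
Proof. by move=> Pcoset Q; rewrite -(coset_reprK Q). Qed.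

Definition quotient : group.
refine (@Defs.Group coset_type coset_mul (coset 1) coset_inv _ _ _).
- apply: coset_ind => a; apply: coset_ind => b; apply: coset_ind => c.
  by rewrite !coset_mulE gmulA.
- by apply: coset_ind => a; rewrite coset_mulE gmul1.
- by apply: coset_ind => a; rewrite coset_invE coset_mulE gmulV.
Defined.

Lemma coset_hom : is_hom (coset : G -> quotient).
Proof. by move=> a b /=; rewrite coset_mulE. Qed.

Lemma coset_eq1 a : (coset a : quotient) = 1 <-> N a.
Proof.
split=> [/coset_eqP | Na]; last by apply/esym/coset_eq; rewrite invg1 gmul1.
by move/NV; rewrite invMg invg1 gmul1 invgK.
Qed.

End Quotient.

Definition zfun (T : Type) : group.
refine (@Defs.Group (T -> int) (fun f g t => f t + g t)%R (fun _ => 0%R)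
  (fun f t => - f t)%R _ _ _).
- by move=> f g h; apply/funext => t; lia.
- by move=> f; apply/funext => t; lia.
- by move=> f; apply/funext => t; lia.
Defined.

Lemma zfun_abelian T : abelian (zfun T).
Proof. by move=> f g; apply/funext => t /=; lia. Qed.

Lemma zfun_pow T (f : zfun T) n t : (f ^+ n : T -> int) t = (f t * n%:Z)%R.
Proof. by elim: n => [|n IHn] /=; rewrite ?IHn; lia. Qed.

Definition conjugate (G : group) (a b : G) : Prop := exists w, b = w^-1 * a * w.

Lemma conjugate_sym (G : group) (a b : G) : conjugate a b -> conjugate b a.
Proof. by case=> w ->; exists w^-1; rewrite invgK !gmulA mulgK mulgV gmul1. Qed.

Lemma conjugate_trans (G : group) (a b c : G) :
  conjugate a b -> conjugate b c -> conjugate a c.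
Proof. by case=> w ->; case=> v ->; exists (w * v); rewrite invMg !gmulA. Qed.

Section CoxeterGroup.
Variables (S : finType) (m : S -> S -> option nat) (W : group) (sgen : S -> W).
Hypothesis HW : is_coxeter_group m sgen.

Local Notation Q := (QW sgen).
Implicit Types x y z : Q.

Lemma sgen_invol s : sgen s * sgen s = 1.
Proof. by case: HW => [[m_diag _] [rels _]]; have /= := rels s s 1%N (m_diag s); rewrite mulg1. Qed.

Lemma sgenV s : (sgen s)^-1 = sgen s.
Proof. by symmetry; apply/mulg_eq1r/sgen_invol. Qed.

Lemma sgen_gen_by w : gen_by sgen w.
Proof.
case: HW => _ [rels univ]; apply: presents_gen_by (conj rels univ) _ w.
by move=> s t k m_st; apply: sval_inj; rewrite gen_group_pow; apply: rels.
Qed.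

Lemma QW_invol (x : Q) : sval x * sval x = 1.
Proof.
case: x => x [w [s xE]] /=; rewrite xE.
by rewrite !gmulA mulgK -(gmulA w^-1) sgen_invol mulg1 gmulV.
Qed.

Lemma QWV (x : Q) : (sval x)^-1 = sval x.
Proof. by symmetry; apply/mulg_eq1r/QW_invol. Qed.

Lemma in_QW_conj (x : Q) w : in_QW sgen (w^-1 * sval x * w).
Proof. by case: x => x [v [s xE]] /=; exists (v * w), s; rewrite xE invMg !gmulA. Qed.

Definition qconj (x : Q) (w : W) : Q := exist _ _ (in_QW_conj x w).

Lemma sgen_in_QW s : in_QW sgen (sgen s).
Proof. by exists 1, s; rewrite invg1 gmul1 mulg1. Qed.

Definition sQ (s : S) : Q := exist _ _ (sgen_in_QW s).

Lemma qconj1 x : qconj x 1 = x.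
Proof. by apply: sval_inj; rewrite /= invg1 gmul1 mulg1. Qed.

Lemma qconjM x v w : qconj x (v * w) = qconj (qconj x v) w.
Proof. by apply: sval_inj; rewrite /= invMg !gmulA. Qed.

Lemma qconjK x y : qconj (qconj x (sval y)) (sval y) = x.
Proof. by apply: sval_inj; rewrite /= QWV !gmulA QW_invol gmul1 -gmulA QW_invol mulg1. Qed.

Lemma qconj_self x : qconj x (sval x) = x.
Proof. by apply: sval_inj; rewrite /= QWV QW_invol gmul1. Qed.

Lemma qop_relE x y z : qop_rel x y z -> z = qconj x (sval y).
Proof. by move=> xyz; apply: sval_inj; rewrite xyz /= QWV. Qed.

Lemma qconj_equivariant (H : group) (f : Q -> H) (sigma : W -> H) : is_hom sigma ->
    (forall y s, f (qconj y (sgen s)) = (sigma (sgen s))^-1 * f y * sigma (sgen s)) ->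
  forall y w, f (qconj y w) = (sigma w)^-1 * f y * sigma w.
Proof.
move=> sigma_hom f_sgen y w; elim: (sgen_gen_by w) y => [|s a _ IHa|s a _ IHa] y.
- by rewrite qconj1 (hom1 sigma_hom) invg1 gmul1 mulg1.
- by rewrite qconjM IHa f_sgen sigma_hom invMg !gmulA.
- by rewrite sgenV qconjM IHa f_sgen sigma_hom invMg !gmulA.
Qed.

Section QuandleRepresentation.
Variables (H : group) (f : Q -> H).
Hypothesis f_qconj : forall x y, f (qconj x (sval y)) = f y * f x * f y.

Lemma quandle_rep_invol x : f x * f x = 1.
Proof.
apply: (@mulgI _ (f x)); apply: (@mulgI _ (f x)).
by rewrite mulg1 !gmulA -f_qconj qconj_self.
Qed.

Lemma quandle_rep_palindrome n x y : exists z : Q,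
  sval z = (sval x * sval y) ^+ n * sval x /\ (f x * f y) ^+ n * f x = f z.
Proof.
elim: n x y => [|n IHn] x y; first by exists x; rewrite !gmul1.
have [z [zE fz]] := IHn y x.
exists (qconj z (sval x)); split.
  by rewrite gpowSr /= QWV zE !gmulA mul_gpow_swap.
by rewrite f_qconj -fz gpowSr !gmulA -mul_gpow_swap.
Qed.

Lemma quandle_rep_coxeter_rels : coxeter_rels m (fun s => f (sQ s)).
Proof.
move=> s t [|n] m_st; first by [].
case: HW => _ [rels _]; have := rels s t n.+1 m_st.
rewrite gpowSr gmulA => /mulg_eq1l; rewrite sgenV => st_t.
have [z [zE fz]] := quandle_rep_palindrome n (sQ s) (sQ t).
rewrite gpowSr gmulA fz.
have -> : z = sQ t by apply: sval_inj; apply: etrans zE st_t.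
exact: quandle_rep_invol.
Qed.

Lemma quandle_rep_hom : exists sigma : W -> H, is_hom sigma /\ forall x, sigma (sval x) = f x.
Proof.
case: HW => _ [_ univ].
have [sigma [sigma_hom [sigma_s _]]] := univ H _ quandle_rep_coxeter_rels.
exists sigma; split=> // x.
have f_sgen y s : f (qconj y (sgen s)) = (sigma (sgen s))^-1 * f y * sigma (sgen s).
  by rewrite sigma_s -(mulg_eq1l (quandle_rep_invol (sQ s))); exact: (f_qconj y (sQ s)).
have [w [s xE]] := proj2_sig x.
have -> : x = qconj (sQ s) w by apply: sval_inj.
by rewrite (qconj_equivariant sigma_hom f_sgen) /= !sigma_hom (homV sigma_hom) sigma_s.
Qed.

End QuandleRepresentation.

Definition class_rep x : option S := [pick s | `[< conjugate (sgen s) (sval x) >] ].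

Lemma class_repP x : exists2 s, class_rep x = Some s & conjugate (sgen s) (sval x).
Proof.
rewrite /class_rep; case: pickP => [s /asboolP | none]; first by exists s.
have [w [s xE]] := proj2_sig x.
by have /asboolPn[] := negbT (none s); exists w.
Qed.

Lemma class_rep_conj x y : conjugate (sval x) (sval y) -> class_rep x = class_rep y.
Proof.
move=> xy; apply: eq_pick => s /=; apply/asboolP/asboolP => sx.
  exact: conjugate_trans sx xy.
exact: conjugate_trans sx (conjugate_sym xy).
Qed.

Lemma class_rep_qconj x w : class_rep (qconj x w) = class_rep x.
Proof. by symmetry; apply: class_rep_conj; exists w. Qed.

Lemma class_rep_sgen x r : class_rep x = Some r -> class_rep (sQ r) = Some r.
Proof.
have [s xs sx] := class_repP x; rewrite xs => -[<-].
by rewrite -xs; apply: class_rep_conj.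
Qed.

Definition class_ind x : zfun S := fun t => if class_rep x == Some t then 1%R else 0%R.

Lemma class_ind_rels : adjoint_rels class_ind.
Proof.
move=> x y z /qop_relE ->; rewrite /class_ind class_rep_qconj.
by apply/funext => t /=; lia.
Qed.

Definition reps : seq S := [seq s <- enum S | class_rep (sQ s) == Some s].

Lemma reps_uniq : uniq reps.
Proof. by rewrite filter_uniq // enum_uniq. Qed.

Lemma mem_reps s : (s \in reps) = (class_rep (sQ s) == Some s).
Proof. by rewrite mem_filter mem_enum andbT. Qed.

Section AdjointGroup.
Variables (A : group) (e : Q -> A).
Hypothesis HA : is_adjoint_group e.

Lemma e_qconj x y : e (qconj x (sval y)) = (e y)^-1 * e x * e y.
Proof. by case: HA => rels _; symmetry; apply: rels; rewrite /qop_rel /= QWV. Qed.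

Lemma e_gen_by a : gen_by e a.
Proof.
apply: (presents_gen_by (rels := @adjoint_rels S W sgen) HA) => x y z xyz.
by apply: sval_inj; case: HA => rels _; apply: rels.
Qed.

Definition sq x : A := e x * e x.

Lemma sq_central x : central (sq x).
Proof.
move=> a; apply: central_gen_by (e_gen_by a) => y.
have ey : (e x)^-1 * ((e x)^-1 * e y * e x) * e x = e y by rewrite -!e_qconj qconjK.
by rewrite -{1}ey /sq !gmulA mulgK mulgV gmul1.
Qed.

Lemma sq_qconj_QW x y : sq (qconj x (sval y)) = sq x.
Proof.
by rewrite /sq e_qconj !gmulA mulgK -(gmulA (e y)^-1) -/(sq x) -(sq_central x) mulgKV.
Qed.

Lemma sq_qconj x w : sq (qconj x w) = sq x.
Proof.
have one_hom : is_hom (fun _ : W => 1 : A) by move=> ? ?; rewrite gmul1.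
rewrite (qconj_equivariant one_hom) => [|y s]; rewrite /= invg1 gmul1 mulg1 //.
exact: (sq_qconj_QW y (sQ s)).
Qed.

Lemma sq_class_rep x r : class_rep x = Some r -> sq x = sq (sQ r).
Proof.
have [s xs [w xE]] := class_repP x; rewrite xs => -[<-].
have -> : x = qconj (sQ s) w by apply: sval_inj.
exact: sq_qconj.
Qed.

Definition sqprod (l : seq S) (c : S -> nat) : A :=
  foldr (fun s a => sq (sQ s) ^+ c s * a) 1 l.

Lemma sqprod_central l c : central (sqprod l c).
Proof.
elim: l => [|s l IHl] /=; first exact: central1.
by apply: centralM => //; apply/centralX/sq_central.
Qed.

Lemma sqprodD l c d : sqprod l (fun s => c s + d s) = sqprod l c * sqprod l d.
Proof.
elim: l => [|s l IHl] /=; first by rewrite gmul1.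
by rewrite IHl gpowD -!gmulA; congr (_ * _); rewrite !gmulA (centralX _ (sq_central _)).
Qed.

Lemma eq_in_sqprod l c d : {in l, c =1 d} -> sqprod l c = sqprod l d.
Proof.
elim: l => [|s l IHl] //= cd.
by rewrite cd ?mem_head // IHl // => t lt; apply: cd; rewrite in_cons lt orbT.
Qed.

Lemma sqprod0 l : sqprod l (fun _ => 0) = 1.
Proof. by elim: l => [|s l IHl] //=; rewrite IHl gmul1. Qed.

Lemma sqprod_delta l r : r \in l -> uniq l -> sqprod l (fun s => nat_of_bool (s == r)) = sq (sQ r).
Proof.
elim: l => [|s l IHl] //=; rewrite in_cons => lr /andP[ls ul].
have [<-|sr] := eqVneq s r.
  rewrite /= mulg1 (@eq_in_sqprod _ _ (fun _ => 0)) ?sqprod0 ?mulg1 // => t lt.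
  by case: eqP => // ts; rewrite -ts lt in ls.
rewrite gmul1 IHl //.
by case/orP: lr => // /eqP rs; rewrite rs eqxx in sr.
Qed.

(* The subgroup generated by the [sq x]: as they are central and [sq x] only
   depends on [class_rep x], its elements are the quotients of two products of
   powers of the [sq (sQ r)], [r] in [reps]. *)
Definition in_sqgroup (a : A) : Prop := exists c d, a * sqprod reps d = sqprod reps c.

Lemma sqgroup1 : in_sqgroup 1.
Proof. by exists (fun _ => 0), (fun _ => 0); rewrite gmul1. Qed.

Lemma sqgroupM a b : in_sqgroup a -> in_sqgroup b -> in_sqgroup (a * b).
Proof.
move=> [c [d ad]] [c' [d' bd']]; exists (fun s => c s + c' s), (fun s => d s + d' s).
by rewrite !sqprodD -ad -bd' !gmulA -(gmulA a b) -(sqprod_central _ d b) !gmulA.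
Qed.

Lemma sqgroupV a : in_sqgroup a -> in_sqgroup a^-1.
Proof. by move=> [c [d ad]]; exists d, c; rewrite -ad mulKg. Qed.

Lemma sqgroup_central a : in_sqgroup a -> central a.
Proof.
move=> [c [d ad]]; rewrite -(mulgK (sqprod reps d) a) ad.
by apply/centralM/centralV; apply: sqprod_central.
Qed.

Lemma sqgroup_conj a b : in_sqgroup a -> in_sqgroup (b^-1 * a * b).
Proof. by move=> Na; rewrite -gmulA (sqgroup_central Na) mulKg. Qed.

Lemma sq_in_sqgroup x : in_sqgroup (sq x).
Proof.
have [r xr _] := class_repP x.
exists (fun s => nat_of_bool (s == r)), (fun _ => 0).
rewrite sqprod0 mulg1 sqprod_delta ?reps_uniq ?(sq_class_rep xr) //.
by rewrite mem_reps (class_rep_sgen xr).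
Qed.

Section ClassCount.
Variable lam : A -> zfun S.
Hypotheses (lam_hom : is_hom lam) (lam_e : forall x, lam (e x) = class_ind x).

Lemma lam_sqprod l c t : {subset l <= reps} ->
  (lam (sqprod l c) : S -> int) t = (2 * c t * count_mem t l)%N.
Proof.
elim: l => [|s l IHl] l_reps /=; first by rewrite (hom1 lam_hom) muln0.
have /eqP s_rep : class_rep (sQ s) == Some s by rewrite -mem_reps l_reps ?mem_head.
rewrite lam_hom (homX lam_hom) /= zfun_pow IHl => [|u lu]; last first.
  by apply: l_reps; rewrite in_cons lu orbT.
rewrite /sq lam_hom !lam_e /= /class_ind s_rep.
have -> : (Some s == Some t) = (s == t) by [].
by case: eqVneq => [<-|_]; lia.
Qed.

Lemma sqgroup_lam_eq1 a : in_sqgroup a -> lam a = 1 -> a = 1.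
Proof.
move=> [c [d ad]] la.
have cd : {in reps, c =1 d}.
  move=> t rt; have := congr1 (fun f : zfun S => (f : S -> int) t) (congr1 lam ad).
  rewrite /= lam_hom la /= !lam_sqprod // count_uniq_mem ?reps_uniq // rt.
  lia.
by apply: (@mulIg _ (sqprod reps d)); rewrite /= gmul1 ad (eq_in_sqprod cd).
Qed.

End ClassCount.

Section Kernel.
Variable phi : A -> W.
Hypotheses (phi_hom : is_hom phi) (phi_e : forall x, phi (e x) = sval x).

Local Notation A_sq := (quotient sqgroup1 sqgroupM sqgroupV sqgroup_conj).
Let coset_sq_hom := coset_hom sqgroup1 sqgroupM sqgroupV sqgroup_conj.

Definition ebar x : A_sq := coset in_sqgroup (e x).

Lemma ebar_invol x : ebar x * ebar x = 1.
Proof. by rewrite /ebar -coset_sq_hom; apply/coset_eq1/sq_in_sqgroup. Qed.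

Lemma ebar_qconj x y : ebar (qconj x (sval y)) = ebar y * ebar x * ebar y.
Proof.
rewrite /ebar e_qconj !coset_sq_hom (homV coset_sq_hom) -/(ebar y).
by rewrite -(mulg_eq1l (ebar_invol y)).
Qed.

Lemma ker_phi_sqgroup a : phi a = 1 -> in_sqgroup a.
Proof.
have [sigma [sigma_hom sigma_ebar]] := quandle_rep_hom ebar_qconj.
have coset_phi b : coset in_sqgroup b = sigma (phi b) :> A_sq.
  apply: (hom_eq_gen_by (f' := sigma \o phi) coset_sq_hom _ _ (e_gen_by b)) => [u v|x] /=.
    by rewrite phi_hom sigma_hom.
  by rewrite phi_e sigma_ebar.
move=> phia; apply/(coset_eq1 sqgroup1 sqgroupM sqgroupV sqgroup_conj).
by rewrite coset_phi phia (hom1 sigma_hom).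
Qed.

Lemma phi_surj w : exists a, phi a = w.
Proof.
elim: (sgen_gen_by w) => [|s v _ [a <-]|s v _ [a <-]].
- by exists 1; apply: hom1.
- by exists (e (sQ s) * a); rewrite phi_hom phi_e.
- by exists ((e (sQ s))^-1 * a); rewrite phi_hom (homV phi_hom) phi_e.
Qed.

End Kernel.
End AdjointGroup.
End CoxeterGroup.


Theorem theorem5p1 (S : finType) (m : S -> S -> option nat) (W : group)
  (sgen : S -> W) (A : group) (e : QW sgen -> A) (phi : A -> W) :
  is_coxeter_group m sgen ->
  is_adjoint_group e ->
  is_hom phi -> (forall x : QW sgen, phi (e x) = proj1_sig x) ->
  (forall a b : A, in_commutator a -> in_commutator b -> phi a = phi b -> a = b) /\
  (forall w : W, in_commutator w <-> exists a : A, in_commutator a /\ phi a = w).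
Proof.
move=> HW HA phi_hom phi_e.
have [lam [lam_hom [lam_e _]]] := proj2 HA _ _ (class_ind_rels HW).
split; last exact: commutator_surj_hom phi_hom (phi_surj HW phi_hom phi_e).
apply: (commutator_inj_hom phi_hom lam_hom (@zfun_abelian S)) => a phia.
exact: (sqgroup_lam_eq1 lam_hom lam_e (ker_phi_sqgroup HW HA phi_hom phi_e phia)).
Qed.
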